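(* Consider the multi-agent system $\dot{x}_i=Ax_i+Bu_i$, $i=1,\dots,N$, with $x_i\in\mathbb{R}^n$, $u_i\in\mathbb{R}^m$, $A\in\mathbb{R}^{n\times n}$, $B\in\mathbb{R}^{n\times m}$. The communication topology is a weighted directed graph $\mathcal{G}=(V,E,W)$, $V=\{1,\dots,N\}$, with adjacency matrix $W=[w_{ij}]$, $w_{ij}\ge 0$ and $w_{ij}>0$ iff $(j,i)\in E$ (agent $j$ sends information to agent $i$). Suppose $\mathcal{G}$ has a directed spanning tree $\mathcal{T}$ with root node $N$, in which each node $i\in\{1,\dots,N-1\}$ has unique parent $k_i$ with $(k_i,i)\in E$, and suppose the root node $N$ of $\mathcal{T}$ is a root vertex in $\mathcal{G}$. Consider the protocol $$u_N=0,\qquad u_i=K_i\,w_{i,k_i}\,(x_{k_i}-x_i),\quad i=1,\dots,N-1,$$ with $K_i\in\mathbb{R}^{m\times n}$. If the gains $K_i$ are chosen such that $A-w_{i,k_i}BK_i$ is Hurwitz for each $i=1,\dots,N-1$, then the closed-loop system achieves asymptotic state consensus, i.e. $\lim_{t\to\infty}\|x_i(t)-x_j(t)\|=0$ for all $i,j\in\{1,\dots,N\}$ and all initial conditions $x_1(0),\dots,x_N(0)\in\mathbb{R}^n$.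
   Context: A matrix is Hurwitz if all its eigenvalues have negative real part. A directed spanning tree of $\mathcal{G}$ rooted at $N$ is a subgraph using edges of $\mathcal{G}$ containing a unique directed path from $N$ to every other vertex. A root vertex of $\mathcal{G}$ is a vertex from which there is a directed path to every other vertex. *)

From mathcomp Require Import all_boot all_order all_algebra.
From mathcomp Require Import all_classical all_reals all_analysis.
From mathcomp Require Import complex.
Set Implicit Arguments. Unset Strict Implicit. Unset Printing Implicit Defensive.
Import Order.TTheory GRing.Theory Num.Theory.
Local Open Scope ring_scope.

Definition hurwitz (R : realType) (n : nat) (M : 'M[R]_n) : Prop :=
  forall z : R[i], eigenvalue (map_mx (fun r : R => (r%:C)%C) M) z -> complex.Re z < 0.

(* Weighted digraph on vertices 'I_N given by its adjacency matrix W: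
   (j, i) is an edge (j sends to i) iff 0 < W i j. *)
Definition edge (R : realType) (N : nat) (W : 'M[R]_N) : rel 'I_N :=
  fun j i => 0 < W i j.

Definition root_vertex (R : realType) (N : nat) (W : 'M[R]_N) (r : 'I_N) : Prop :=
  forall i, connect (edge W) r i.

(* par encodes a directed spanning tree of G rooted at r: every non-root
   vertex i has the unique parent par i, the edge (par i, i) is an edge of G,
   and following parents from any vertex reaches r (no cycles), so that there
   is a unique tree path from r to every vertex. (par r is irrelevant.) *)
Definition spanning_tree_parent (R : realType) (N : nat) (W : 'M[R]_N)
    (r : 'I_N) (par : 'I_N -> 'I_N) : Prop :=
  (forall i, i != r -> edge W (par i) i) /\
  (forall i, exists k : nat, iter k par i = r).

Definition protocol (R : realType) (N n m : nat) (W : 'M[R]_N) (r : 'I_N)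
    (par : 'I_N -> 'I_N) (K : 'I_N -> 'M[R]_(m, n)) (x : 'I_N -> 'cV[R]_n)
    (i : 'I_N) : 'cV[R]_m :=
  if i == r then 0 else W i (par i) *: (K i *m (x (par i) - x i)).

From mathcomp Require Import all_boot all_order all_algebra.
From mathcomp Require Import all_classical all_reals all_analysis.
From mathcomp Require Import complex.
From mathcomp Require Import ring lra.
Import Order.TTheory GRing.Theory Num.Theory.
Import numFieldNormedType.Exports.
Local Open Scope classical_set_scope.
Local Open Scope ring_scope.

(* The errors d_k = x_k - x_root obey d_k' = (A - w_k B K_k) d_k + w_k B K_k d_(par k):
   a Hurwitz system driven by the error of the parent.  Since d_root = 0, induction
   along the spanning tree gives d_k -> 0 for every k, once we know that a Hurwitz
   system y' = M y + f with f -> 0 has y -> 0.  For the latter, a Schur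
   triangularisation of M over C turns the system into scalar equations
   z' = lam z + h with Re lam < 0, where h -> 0 depends only on the coordinates
   already treated; for such an equation V = |z|^2 satisfies V' <= -c V + e with
   e -> 0, and comparison with exp(-c t) forces V -> 0. *)

Section FilterLimits.
Context {T : Type} {F : set_system T} {FF : Filter F}.

Lemma cvg_sum {K : numFieldType} {V : normedModType K} (I : Type) (r : seq I)
    (P : pred I) (f : I -> T -> V) (a : I -> V) :
  (forall i, P i -> f i @ F --> a i) ->
  (fun x => \sum_(i <- r | P i) f i x) @ F --> \sum_(i <- r | P i) a i.
Proof.
move=> fa; elim: r => [|i r IHr].
  by under eq_fun do rewrite big_nil; rewrite big_nil; exact: cvg_cst.
under eq_fun do rewrite big_cons; rewrite big_cons.
by case: ifP => Pi //; apply: cvgD => //; exact: fa.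
Qed.

Lemma cvg_mxP {K : numFieldType} (m n : nat) (f : T -> 'M[K]_(m, n))
    (M : 'M[K]_(m, n)) :
  f @ F --> M <-> forall i j, (fun x => f x i j) @ F --> M i j.
Proof.
split=> [fM i j | fM].
  exact: (continuous_cvg _ (@coord_continuous K m n i j M) fM).
apply/cvg_mx_entourageP => A entA.
have /filter_forall : forall ij : 'I_m * 'I_n,
    \forall x \near F, (M ij.1 ij.2, f x ij.1 ij.2) \in A.
  move=> [i j]; have /cvg_entourageP/(_ A entA) fijA := fM i j.
  by near=> x; rewrite inE; near: x; exact: fijA.
by apply: filterS => x fxA i j; exact: (fxA (i, j)).
Unshelve. all: by end_near. Qed.

Lemma cvg_mulmx {K : numFieldType} (m n p : nat) (A : 'M[K]_(m, n))
    (f : T -> 'M[K]_(n, p)) (a : 'M[K]_(n, p)) :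
  f @ F --> a -> (fun x => A *m f x) @ F --> A *m a.
Proof.
move=> /cvg_mxP fa; apply/cvg_mxP => i j.
under eq_fun do rewrite mxE; rewrite mxE.
by apply: cvg_sum => k _; apply: cvgM; [exact: cvg_cst | exact: fa].
Qed.

End FilterLimits.

Lemma is_derive_entry {R : numFieldType} {V : normedModType R} (m n : nat)
    (f : V -> 'M[R]_(m, n)) (x v : V) (df : 'M[R]_(m, n)) i j :
  is_derive x v f df -> is_derive x v (fun y => f y i j) (df i j).
Proof.
move=> fdf.
have quot_df : (fun h : R => h^-1 *: (f (h *: v + x) - f x)) @ 0^' --> df.
  by rewrite -(@derive_val _ _ _ _ _ _ _ fdf); exact: (@ex_derive _ _ _ _ _ _ _ fdf).
have : (fun h : R => h^-1 *: (f (h *: v + x) i j - f x i j)) @ 0^' --> df i j.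
  apply: cvg_trans (continuous_cvg _ (@coord_continuous R m n i j df) quot_df).
  by apply: near_eq_cvg; near=> h; rewrite /= !mxE.
by move=> quot_dfij; split; [apply/cvg_ex; exists (df i j) | exact: cvg_lim].
Unshelve. all: by end_near.
Qed.

Section Decay.
Context {R : realType}.

Lemma is_derive_expR_affine (c t0 t : R) :
  is_derive t 1 (fun s => expR (c * (s - t0))) (expR (c * (t - t0)) * c).
Proof.
have dlin : is_derive t 1 (fun s => c * (s - t0)) c.
  have := is_deriveZ c (is_deriveB (is_derive_id t (1 : R)) (is_derive_cst t0 t 1)).
  by rewrite subr0 [c *: 1]mulr1.
exact: (is_derive1_comp (is_derive_expR _) dlin).
Qed.

Lemma expR_weighted_nincr (V dV : R -> R) (c a t0 : R) :
  (forall t : R, is_derive t 1 V (dV t)) ->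
  (forall t, t0 < t -> dV t <= - c * (V t - a)) ->
  forall t, t0 <= t -> expR (c * (t - t0)) * (V t - a) <= V t0 - a.
Proof.
move=> dV_V dV_le t t0t.
pose Z s := expR (c * (s - t0)) * (V s - a).
have dZ (s : R) : is_derive s 1 Z (expR (c * (s - t0)) * (dV s + c * (V s - a))).
  rewrite (_ : Z = (fun s => expR (c * (s - t0))) * (V - cst a)) //.
  have := is_deriveM (is_derive_expR_affine c t0 s)
    (is_deriveB (dV_V s) (is_derive_cst a s 1)).
  move/is_derive_eq; apply; rewrite /GRing.scale /= subr0.
  by change ((V - cst a) s) with (V s - a); ring.
have <- : Z t0 = V t0 - a by rewrite /Z subrr mulr0 expR0 mul1r.
change (Z t <= Z t0).
apply: (ler0_derive1_nincry (a := t0)) => //.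
- move=> s; rewrite in_itv /= andbT => t0s.
  rewrite derive1E (@derive_val _ _ _ _ _ _ _ (dZ s)) pmulr_rle0 ?expR_gt0 //.
  by have := dV_le s t0s; lra.
- apply: continuous_subspaceT => s.
  apply: differentiable_continuous; apply/derivable1_diffP.
  exact: (@ex_derive _ _ _ _ _ _ _ (dZ s)).
Qed.

Lemma cvg0_lyapunov (V dV e : R -> R) (c : R) : 0 < c ->
  (forall t : R, is_derive t 1 V (dV t)) -> (forall t, 0 <= V t) ->
  (forall t, dV t <= - c * V t + e t) ->
  e t @[t --> +oo] --> 0 -> V t @[t --> +oo] --> 0.
Proof.
move=> c_gt0 dV_V V_ge0 dV_le e0; apply/cvgr0Pnorm_lt => eps eps_gt0.
have ceps_gt0 : 0 < c * eps by rewrite mulr_gt0.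
have [t0 [_ e_small]] := cvgr0_norm_lt e e0 _ (divr_gt0 ceps_gt0 (ltr0Sn R 1)).
have decay := expR_weighted_nincr V dV c (eps / 2) t0 dV_V.
have {}decay t : t0 <= t -> expR (c * (t - t0)) * (V t - eps / 2) <= V t0 - eps / 2.
  apply: decay => s /e_small /= es; have := dV_le s; have := ler_norm (e s); lra.
(* Past this time, expR (c (t - t0)) >= 1 + c (t - t0) turns the weighted bound
   into V t < eps. *)
exists (t0 + 2 * V t0 / (c * eps)); split=> [|t t_big]; first by rewrite num_real.
have t0t : t0 <= t.
  by apply: le_trans (ltW t_big); rewrite lerDl divr_ge0 ?mulr_ge0 // ltW.
have exp_ge := expR_ge1Dx (c * (t - t0)).
have big : 2 * V t0 < (t - t0) * (c * eps) by rewrite -ltr_pdivrMr // ltrBrDl.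
rewrite ger0_norm // ltNge; apply/negP => V_ge.
have := decay t t0t; have := V_ge0 t0.
have : 0 <= (expR (c * (t - t0)) - 1 - c * (t - t0)) * eps.
  by apply: mulr_ge0; [lra | exact: ltW].
nra.
Qed.

End Decay.

Lemma cvg0_sqr_le {R : realFieldType} {T : Type} {F : set_system T} {FF : Filter F}
    (a V : T -> R) :
  (forall x, a x ^+ 2 <= V x) -> V @ F --> 0 -> a @ F --> 0.
Proof.
move=> aV V0; apply/cvgr0Pnorm_lt => eps eps_gt0.
apply: filterS (cvgr0_norm_lt V V0 _ (exprn_gt0 2 eps_gt0)) => x Vx.
rewrite -(ltr_pXn2r (ltn0Sn 1)) ?nnegrE ?normr_ge0 ?(ltW eps_gt0) //.
rewrite -normrX ger0_norm ?sqr_ge0 //.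
by apply: le_lt_trans (aV x) (le_lt_trans (ler_norm _) Vx).
Qed.

Section ComplexValued.
Context {R : realType}.

(* R[i] carries no topology in the analysis library, so convergence and derivatives
   of complex-valued functions are expressed through their real and imaginary parts. *)
Definition cvg0C {T} (F : set_system T) (u : T -> R[i]) : Prop :=
  (fun x => complex.Re (u x)) @ F --> 0 /\ (fun x => complex.Im (u x)) @ F --> 0.

Definition is_deriveC (u : R -> R[i]) (t : R) (du : R[i]) : Prop :=
  is_derive t 1 (fun s => complex.Re (u s)) (complex.Re du) /\
  is_derive t 1 (fun s => complex.Im (u s)) (complex.Im du).

Lemma Re_mul (z w : R[i]) :
  complex.Re (z * w) = complex.Re z * complex.Re w - complex.Im z * complex.Im w.
Proof. by case: z; case: w. Qed.

Lemma Im_mul (z w : R[i]) :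
  complex.Im (z * w) = complex.Re z * complex.Im w + complex.Im z * complex.Re w.
Proof. by case: z => a b; case: w => c d /=; rewrite addrC. Qed.

Section Cvg0C.
Context {T : Type} {F : set_system T} {FF : Filter F}.

Lemma cvg0C_real (f : T -> R) : f @ F --> 0 -> cvg0C F (fun x => (f x)%:C%C).
Proof. by split=> //=; exact: cvg_cst. Qed.

Lemma cvg0C_add (u v : T -> R[i]) :
  cvg0C F u -> cvg0C F v -> cvg0C F (fun x => u x + v x).
Proof.
by move=> [uRe uIm] [vRe vIm]; split; under eq_fun do rewrite raddfD;
  rewrite -(addr0 0); exact: cvgD.
Qed.

Lemma cvg0C_sum (I : Type) (r : seq I) (P : pred I) (u : I -> T -> R[i]) :
  (forall i, P i -> cvg0C F (u i)) -> cvg0C F (fun x => \sum_(i <- r | P i) u i x).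
Proof.
have sum0 (g : I -> T -> R) : (forall i, P i -> g i @ F --> 0) ->
    (fun x => \sum_(i <- r | P i) g i x) @ F --> 0.
  by move=> /(cvg_sum _ r); rewrite big1_eq.
by move=> u0; split; under eq_fun do rewrite raddf_sum; apply: sum0 => i /u0 [].
Qed.

Lemma cvg0C_mull (lam : R[i]) (u : T -> R[i]) : cvg0C F u -> cvg0C F (fun x => lam * u x).
Proof.
have cvgMl (k : R) (f : T -> R) : f @ F --> 0 -> (fun x => k * f x) @ F --> 0.
  by move=> f0; rewrite -(mulr0 k); apply: cvgM => //; exact: cvg_cst.
move=> [uRe uIm]; split; under eq_fun do rewrite (Re_mul, Im_mul).
  by rewrite -(subr0 0); apply: cvgB; exact: cvgMl.
by rewrite -(addr0 0); apply: cvgD; exact: cvgMl.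
Qed.

End Cvg0C.

Lemma cvg0C_linear_ode (lam : R[i]) (z h : R -> R[i]) : complex.Re lam < 0 ->
  (forall t, is_deriveC z t (lam * z t + h t)) -> cvg0C +oo h -> cvg0C +oo z.
Proof.
move=> lam_lt0 dz [hRe hIm].
pose a s := complex.Re (z s); pose b s := complex.Im (z s).
pose p s := complex.Re (h s); pose q s := complex.Im (h s).
pose c := - complex.Re lam; have c_gt0 : 0 < c by rewrite oppr_gt0.
pose V s := a s ^+ 2 + b s ^+ 2.
pose dV s := 2 * a s * complex.Re (lam * z s + h s)
  + 2 * b s * complex.Im (lam * z s + h s).
pose e s := (p s ^+ 2 + q s ^+ 2) / c.
have dV_V (t : R) : is_derive t 1 V (dV t).
  have [dRe dIm] := dz t; rewrite (_ : V = a ^+ 2 + b ^+ 2) //.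
  have := is_deriveD (is_deriveX 2 dRe) (is_deriveX 2 dIm).
  by move/is_derive_eq; apply; rewrite /dV /GRing.scale /= !expr1; ring.
(* dV = - 2 c V + 2 (a p + b q), and 2 (a p + b q) <= c V + (p^2 + q^2) / c. *)
have dV_le t : dV t <= - c * V t + e t.
  rewrite -(ler_pM2r c_gt0) [leRHS]mulrDl divfK ?gt_eqF //.
  rewrite /dV /V !raddfD /= !Re_mul !Im_mul.
  have := sqr_ge0 (c * a t - p t); have := sqr_ge0 (c * b t - q t).
  rewrite /c /a /b /p /q; nra.
have e0 : e t @[t --> +oo] --> 0.
  have sqr0 (f : R -> R) : f t @[t --> +oo] --> 0 -> f t ^+ 2 @[t --> +oo] --> 0.
    by move=> f0; under eq_fun do rewrite expr2; rewrite -(mulr0 0); exact: cvgM.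
  rewrite -(mul0r c^-1) -(addr0 0).
  by apply: cvgM; [apply: cvgD; exact: sqr0 | exact: cvg_cst].
have V_ge0 t : 0 <= V t by rewrite addr_ge0 ?sqr_ge0.
have V0 := cvg0_lyapunov _ _ _ _ c_gt0 dV_V V_ge0 dV_le e0.
by split; apply: (cvg0_sqr_le _ _ _ V0) => t; rewrite /V ?lerDl ?lerDr sqr_ge0.
Qed.

Lemma cvg0C_trig_ode n (L : 'M[R[i]]_n) (z g : R -> 'cV[R[i]]_n) :
  is_trig_mx L -> (forall k, complex.Re (L k k) < 0) ->
  (forall k t, is_deriveC (fun s => z s k 0) t ((L *m z t + g t) k 0)) ->
  (forall k, cvg0C +oo (fun t => g t k 0)) ->
  forall k, cvg0C +oo (fun t => z t k 0).
Proof.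
move=> /is_trig_mxP Ltrig Ldiag dz g0.
suff z0 m (k : 'I_n) : (k < m)%N -> cvg0C +oo (fun t => z t k 0) by move=> k; exact: (z0 n).
elim: m k => [//|m IHm] k; rewrite ltnS leq_eqVlt => /predU1P[km | /IHm //].
pose h t := \sum_(l < n | (l < k)%N) L k l * z t l 0 + g t k 0.
apply: (cvg0C_linear_ode (L k k) _ h) => [//|t|].
  have <- : (L *m z t + g t) k 0 = L k k * z t k 0 + h t.
    rewrite !mxE (bigD1 k) //= -addrA; congr (_ + (_ + _)).
    rewrite [LHS]big_mkcond [RHS]big_mkcond; apply: eq_bigr => l _.
    case: ltngtP => [lk | /Ltrig -> | /val_inj ->]; rewrite ?eqxx ?mul0r ?if_same //.
    by rewrite ifT // -val_eqE neq_ltn lk.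
  exact: dz.
apply: cvg0C_add (g0 k); apply: cvg0C_sum => l lk.
by apply: cvg0C_mull; apply: IHm; rewrite -km.
Qed.

End ComplexValued.

Lemma trig_mx_eigenvalue {F : fieldType} {n} (A : 'M[F]_n) k :
  is_trig_mx A -> eigenvalue A (A k k).
Proof.
move=> Atrig; rewrite eigenvalue_root_char char_poly_trig // rootE horner_prod.
by rewrite (bigD1 k) //= hornerXsubC subrr mul0r.
Qed.

Section Complexification.
Context {R : realType}.
Local Notation mxC A := (map_mx (real_complex R) A).

Lemma Re_mulmx_real p q (Q : 'M[R[i]]_(p, q)) (v : 'cV[R]_q) k :
  complex.Re ((Q *m mxC v) k 0) = \sum_j complex.Re (Q k j) * v j 0.
Proof.
by rewrite mxE raddf_sum; apply: eq_bigr => j _; rewrite mxE /= Re_mul /= mulr0 subr0.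
Qed.

Lemma Im_mulmx_real p q (Q : 'M[R[i]]_(p, q)) (v : 'cV[R]_q) k :
  complex.Im ((Q *m mxC v) k 0) = \sum_j complex.Im (Q k j) * v j 0.
Proof.
by rewrite mxE raddf_sum; apply: eq_bigr => j _; rewrite mxE /= Im_mul /= mulr0 add0r.
Qed.

Lemma is_deriveC_mulmx p q (Q : 'M[R[i]]_(p, q)) (y : R -> 'cV[R]_q) (t : R) dy k :
  is_derive t 1 y dy -> is_deriveC (fun s => (Q *m mxC (y s)) k 0) t ((Q *m mxC dy) k 0).
Proof.
move=> dy_y.
have dlin (c : 'I_q -> R) :
    is_derive t 1 (fun s => \sum_j c j * y s j 0) (\sum_j c j * dy j 0).
  rewrite (_ : (fun s => _) = \sum_j (c j \*: (fun s => y s j 0))).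
    by apply: is_derive_sum => j; apply: is_deriveZ; exact: is_derive_entry.
  by apply/funext => s; rewrite fct_sumE.
by split; under eq_fun do rewrite (Re_mulmx_real, Im_mulmx_real);
  rewrite (Re_mulmx_real, Im_mulmx_real); exact: dlin.
Qed.

Lemma hurwitz_trig n (M : 'M[R]_n.+1) : hurwitz M ->
  exists2 P : 'M[R[i]]_n.+1, P \in unitmx &
    is_trig_mx (P *m mxC M *m invmx P) /\
    forall k, complex.Re ((P *m mxC M *m invmx P) k k) < 0.
Proof.
move=> hM; have [P /unitarymx_unit Punit Ptrig] := Schur (mxC M) (ltn0Sn n).
have Ttrig : is_trig_mx (P *m mxC M *m invmx P).
  by move: Ptrig; rewrite /similar_to /conjmx pinvmxE.
exists P => //; split => // k; apply: hM.
apply: (@eigenvalue_conjmx _ _ _ P).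
- by apply: submx_full; rewrite row_full_unit.
- by rewrite row_free_unit.
- by rewrite /conjmx pinvmxE //; exact: (trig_mx_eigenvalue _ k Ttrig).
Qed.

Lemma hurwitz_stable n (M : 'M[R]_n) (y f : R -> 'cV[R]_n) : hurwitz M ->
  (forall t : R, is_derive t 1 y (M *m y t + f t)) ->
  f t @[t --> +oo] --> (0 : 'cV[R]_n) -> y t @[t --> +oo] --> (0 : 'cV[R]_n).
Proof.
case: n => [|n] in M y f *; first by move=> _ _ _; apply/cvg_mxP => -[].
move=> /hurwitz_trig[P Punit [Ttrig Tdiag]] dy /cvg_mxP f0.
pose z t := P *m mxC (y t).
have dz k t : is_deriveC (fun s => z s k 0) t
    ((P *m mxC M *m invmx P *m z t + P *m mxC (f t)) k 0).
  rewrite mulmxA mulmxKV // -mulmxA -mulmxDr -map_mxM -map_mxD.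
  exact: is_deriveC_mulmx.
have g0 k : cvg0C +oo (fun t => (P *m mxC (f t)) k 0).
  under eq_fun do rewrite mxE; apply: cvg0C_sum => l _; apply: cvg0C_mull.
  under eq_fun do rewrite mxE; apply: cvg0C_real.
  by have := f0 l 0; rewrite mxE.
have z0 := cvg0C_trig_ode _ _ _ _ Ttrig Tdiag dz g0.
apply/cvg_mxP => i j; rewrite (ord1 j) mxE.
have [+ _] : cvg0C +oo (fun t => (invmx P *m z t) i 0).
  under eq_fun do rewrite mxE.
  by apply: cvg0C_sum => l _; apply: cvg0C_mull; exact: z0.
by under eq_fun do rewrite /z mulKmx // mxE.
Qed.

End Complexification.

Lemma parent_tree_ind (T : eqType) (r : T) (par : T -> T) (P : T -> Prop) :
  P r -> (forall k, k != r -> P (par k) -> P k) ->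
  forall k, (exists p, iter p par k = r) -> P k.
Proof.
move=> Pr Ppar k [p]; elim: p k => [|p IHp] k; first by move=> /= ->.
rewrite iterSr => /IHp; have [-> // | kr] := eqVneq k r; exact: Ppar.
Qed.

Lemma protocol_error_dynamics {R : realType} {N n m : nat} (A : 'M[R]_n)
    (B : 'M[R]_(n, m)) (W : 'M[R]_N) (r : 'I_N) (par : 'I_N -> 'I_N)
    (K : 'I_N -> 'M[R]_(m, n)) (x : 'I_N -> 'cV[R]_n) (k : 'I_N) : k != r ->
  (A *m x k + B *m protocol W r par K x k) - (A *m x r + B *m protocol W r par K x r)
  = (A - W k (par k) *: (B *m K k)) *m (x k - x r)
    + W k (par k) *: (B *m K k) *m (x (par k) - x r).
Proof.
move=> kr; rewrite /protocol (negbTE kr) eqxx mulmx0 addr0.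
set BK := W k (par k) *: (B *m K k).
have -> : B *m (W k (par k) *: (K k *m (x (par k) - x k))) = BK *m (x (par k) - x k).
  by rewrite /BK scalemxAl mulmxA -scalemxAr.
rewrite mulmxBl !mulmxBr opprB -[RHS]addrA [BK *m x r - _ + _]addrC subrKA.
by rewrite addrAC.
Qed.

Theorem theorem2 (R : realType) (N n m : nat)
    (A : 'M[R]_n) (B : 'M[R]_(n, m)) (W : 'M[R]_N.+1)
    (par : 'I_N.+1 -> 'I_N.+1) (K : 'I_N.+1 -> 'M[R]_(m, n)) :
  (forall i j, 0 <= W i j) ->
  spanning_tree_parent W ord_max par ->
  root_vertex W ord_max ->
  (forall i : 'I_N.+1, i != ord_max -> hurwitz (A - W i (par i) *: (B *m K i))) ->
  forall x : 'I_N.+1 -> R -> 'cV[R]_n,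
    (forall (i : 'I_N.+1) (t : R),
        is_derive t (1 : R) (x i)
          (A *m x i t + B *m protocol W ord_max par K (fun j => x j t) i)) ->
    forall i j : 'I_N.+1, `|x i t - x j t| @[t --> +oo] --> 0.
Proof.
move=> _ [_ reach_root] _ hurwitzK x dx.
pose d k t := x k t - x ord_max t.
have d0 k : d k t @[t --> +oo] --> (0 : 'cV[R]_n).
  apply: (@parent_tree_ind _ ord_max par (fun k => d k t @[t --> +oo] --> (0 : 'cV[R]_n)))
    (reach_root k) => [|{}k kr d_par0].
    by under eq_fun do rewrite /d subrr; exact: cvg_cst.
  pose BK := W k (par k) *: (B *m K k).
  apply: (hurwitz_stable _ _ _ (fun t => BK *m d (par k) t) (hurwitzK k kr)) => [t|].
    rewrite /d -(protocol_error_dynamics A B W _ par K (fun j => x j t) _ kr).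
    exact: is_deriveB (dx k t) (dx ord_max t).
  by rewrite -(mulmx0 _ BK); exact: cvg_mulmx.
move=> i j; have -> : (fun t => `|x i t - x j t|) = (fun t => `|d i t - d j t|).
  by apply/funext => t; rewrite /d opprB subrKA.
rewrite -(@normr0 _ 'cV[R]_n) -(subr0 (0 : 'cV[R]_n)).
exact: cvg_norm (cvgB (d0 i) (d0 j)).
Qed.
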